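(* Let $k\ge2$, $n\ge1$, and $A=\{0<1<\cdots<k-1\}$. Let $G\subseteq A^{k}$ be the set of the $k!$ words of length $k$ in which each letter of $A$ occurs exactly once, and let $\Gamma_{k,n}=G^{k^{n-1}}$ (the set of concatenations of $k^{n-1}$ words of $G$, repetitions allowed). Then the set of words $BW(M)$, as $M$ ranges over all de Bruijn sets of span $n$ over $A$, is exactly $\Gamma_{k,n}$.
   Context: A word is primitive if it is not a proper power of another word; a necklace is the set of conjugates ($xy\sim yx$) of a primitive word, its length being the common length of its words. A multiset $M=\{n_{1},\dots,n_{t}\}$ of necklaces is a de Bruijn set of span $n$ over $A$ if $|n_{1}|+\cdots+|n_{t}|=k^{n}$ and every word of $A^{n}$ is a prefix of some power of some word belonging to one of the $n_{i}$. Burrows–Wheeler map: with $l$ the lcm of the lengths of the necklaces in $M$, sort lexicographically the list of all words $v^{l/|v|}$, $v$ ranging over the words of each necklace of $M$ (with multiplicity); $BW(M)$ is the word formed by the last letters of these words, in this order. *)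

From mathcomp Require Import all_boot.
Set Implicit Arguments. Unset Strict Implicit. Unset Printing Implicit Defensive.

Definition word_over (k : nat) (w : seq nat) : bool := all (fun a => a < k) w.

Definition wpow (u : seq nat) (m : nat) : seq nat := flatten (nseq m u).

(* primitive: not a proper power of another word (the empty word is (nil)^2,
   hence not primitive) *)
Definition primitive (w : seq nat) : Prop :=
  ~ (exists (u : seq nat) (m : nat), 1 < m /\ w = wpow u m).

(* A necklace is represented by one of its (primitive) words v; the words of
   the necklace are the conjugates of v, i.e. its rotations rot i v, i < |v|
   (pairwise distinct since v is primitive). *)
Definition necklace_words (v : seq nat) : seq (seq nat) :=
  [seq rot i v | i <- iota 0 (size v)].

(* A multiset of necklaces is a list M of representatives (primitive words).
   De Bruijn set of span n over A (|A| = k). *)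
Definition deBruijn_set (k n : nat) (M : seq (seq nat)) : Prop :=
  (forall v, v \in M -> primitive v /\ word_over k v) /\
  sumn [seq size v | v <- M] = k ^ n /\
  (forall u : seq nat, size u = n -> word_over k u ->
     exists v, v \in M /\ exists w, w \in necklace_words v /\
       exists m, prefix u (wpow w m)).

Fixpoint lexle (s t : seq nat) : bool :=
  match s, t with
  | [::], _ => true
  | _ :: _, [::] => false
  | a :: s', b :: t' => (a < b) || ((a == b) && lexle s' t')
  end.

Definition BW (M : seq (seq nat)) : seq nat :=
  let l := foldr lcmn 1 [seq size v | v <- M] in
  let ws := flatten [seq [seq wpow w (l %/ size v) | w <- necklace_words v]
                    | v <- M] in
  [seq last 0 w | w <- sort lexle ws].

Definition Gk (k : nat) (w : seq nat) : bool := perm_eq w (iota 0 k).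

Definition Gamma (k n : nat) (w : seq nat) : Prop :=
  exists ws : seq (seq nat),
    size ws = k ^ (n - 1) /\ all (Gk k) ws /\ w = flatten ws.

(* Sort the rows of the Burrows-Wheeler matrix of a de Bruijn set M of span n.
   The length-n prefixes of the periodically extended rows are the k^n words of
   length n, each exactly once, so the j-th sorted row starts with the base-k
   digits of j, and a row is determined by its prefix.  The k rows of indices
   i*k + r, r < k, all start with the n-1 digits of i.  Rotating such a row
   right by one letter gives another row, starting with its last letter followed
   by the digits of i; hence the k last letters are distinct, and every factor
   of length k of BW(M) is a permutation of A.
   Conversely, for w in Gamma, the map sending j to the index whose digits are
   w_j followed by the first n-1 digits of j (the LF mapping) permutes the k^n
   indices.  Reading first letters along the cycles of its inverse gives
   primitive necklaces forming a de Bruijn set whose j-th sorted row ends with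
   w_j. *)

From mathcomp Require Import all_boot all_order.
Set Implicit Arguments. Unset Strict Implicit. Unset Printing Implicit Defensive.
Import Order.TTheory.

Lemma lexleE s t : lexle s t = (s <= t :> seqlexi nat)%O.
Proof.
by elim: s t => [|a s IH] [|b t] //=; rewrite lexi_cons !leEnat IH; case: ltngtP.
Qed.

Lemma lexle_trans : transitive lexle.
Proof. by move=> t s u; rewrite !lexleE; apply: le_trans. Qed.

Lemma lexle_anti : antisymmetric lexle.
Proof. by move=> s t; rewrite !lexleE; apply: le_anti. Qed.

Lemma lexle_total : total lexle.
Proof. by move=> s t; rewrite !lexleE; apply: le_total. Qed.

Lemma lexle_cat p q x y : size p = size q ->
  lexle (p ++ x) (q ++ y) = if p == q then lexle x y else lexle p q.
Proof.
elim: p q => [|a p IH] [|b q] //= [pq].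
by rewrite eqseq_cons IH //; case: ltngtP; rewrite ?andbF.
Qed.

Lemma lexle_take m s t : lexle s t -> lexle (take m s) (take m t).
Proof.
elim: m s t => [|m IH] [|a s] [|b t] //= /orP[->//|/andP[/eqP-> st]].
by rewrite eqxx IH ?orbT.
Qed.

Lemma wpowS u m : wpow u m.+1 = u ++ wpow u m.
Proof. by []. Qed.

Lemma wpowSr u m : wpow u m.+1 = wpow u m ++ u.
Proof.
elim: m => [|m IH]; first by rewrite /wpow /= cats0.
by rewrite [LHS]wpowS {1}IH catA -wpowS.
Qed.

Lemma size_wpow u m : size (wpow u m) = m * size u.
Proof. by elim: m => [|m IH] //; rewrite wpowS size_cat IH mulSn. Qed.

Lemma nth_wpow u m j : j < m * size u ->
  nth 0 (wpow u m) j = nth 0 u (j %% size u).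
Proof.
elim: m j => [|m IH] j //; rewrite mulSn wpowS nth_cat => Hj.
case: ltnP => ju; first by rewrite modn_small.
rewrite IH; last by rewrite -(ltn_add2l (size u)) subnKC.
by rewrite -{2}(subnK ju) modnDr.
Qed.

Lemma rotr1_wpow u m : rotr 1 (wpow u m) = wpow (rotr 1 u) m.
Proof.
case: m => [|m] //; case/lastP: u => [|b x]; first by rewrite /wpow; elim: m => // m /= ->.
have wpow_rcons q : wpow (rcons b x) q ++ b = b ++ wpow (x :: b) q.
  by elim: q => [|q IH]; rewrite ?cats0 // !wpowS -catA IH cat_rcons.
by rewrite rotr1_rcons wpowSr -rcons_cat rotr1_rcons wpow_rcons.
Qed.

Lemma lexle_wpow m X Y : size X = size Y -> lexle X Y -> lexle (wpow X m) (wpow Y m).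
Proof.
move=> sXY le; elim: m => [|m IH] //.
by rewrite !wpowS lexle_cat //; case: eqP.
Qed.

Definition ptake n (X : seq nat) : seq nat := mkseq (fun i => nth 0 X (i %% size X)) n.

Lemma size_ptake n X : size (ptake n X) = n.
Proof. exact: size_mkseq. Qed.

Lemma nth_ptake n X i : i < n -> nth 0 (ptake n X) i = nth 0 X (i %% size X).
Proof. exact: nth_mkseq. Qed.

Lemma ptakeE n X : 0 < size X -> ptake n X = take n (wpow X n).
Proof.
move=> X_gt0; have n_le : n <= n * size X by rewrite leq_pmulr.
apply: (@eq_from_nth _ 0) => [|i]; rewrite size_ptake ?size_takel ?size_wpow // => lt_in.
by rewrite nth_ptake // nth_take // nth_wpow // (leq_trans lt_in).
Qed.

Lemma ptake_mono n X Y : size X = size Y -> 0 < size X -> lexle X Y ->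
  lexle (ptake n X) (ptake n Y).
Proof.
move=> sXY X_gt0 le; rewrite !ptakeE -?sXY //.
exact/lexle_take/lexle_wpow.
Qed.

Lemma ptake_rotr n X : 0 < size X -> ptake n.+1 (rotr 1 X) = last 0 X :: ptake n X.
Proof.
case/lastP: X => [|b x] // _; rewrite rotr1_rcons last_rcons.
apply: (@eq_from_nth _ 0) => [|[|i]]; first by rewrite size_ptake /= size_ptake.
  by rewrite nth_ptake //= mod0n.
rewrite size_ptake => lt_in.
rewrite nth_ptake //= nth_ptake // size_rcons -addn1 -modnDml.
have : i %% (size b).+1 < (size b).+1 by rewrite ltn_mod.
rewrite ltnS leq_eqVlt => /orP[/eqP ->|ib].
  by rewrite addn1 modnn nth_rcons ltnn eqxx.
by rewrite addn1 modn_small //= nth_rcons ib.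
Qed.

Lemma ptake_wpow n X q : 0 < q -> ptake n (wpow X q) = ptake n X.
Proof.
move=> q_gt0; apply: (@eq_from_nth _ 0) => [|i]; rewrite !size_ptake // => lt_in.
rewrite !nth_ptake // size_wpow; have [X0|X_gt0] := posnP (size X).
  by rewrite !nth_default ?size_wpow ?X0 ?muln0.
by rewrite nth_wpow ?ltn_mod ?muln_gt0 ?q_gt0 // modn_dvdm ?dvdn_mull.
Qed.

Lemma ptake_prefix u X m : prefix u (wpow X m) -> ptake (size u) X = u.
Proof.
case/prefixP=> s def_u; apply: (@eq_from_nth _ 0) => [|i]; rewrite size_ptake // => lt_iu.
have lt_i : i < m * size X by rewrite -size_wpow def_u size_cat ltn_addr.
by rewrite nth_ptake // -(nth_wpow lt_i) def_u nth_cat lt_iu.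
Qed.

(* Most significant digit first, so that [digits k m] is monotone for [lexle]. *)
Fixpoint digits (k m j : nat) : seq nat :=
  if m is m'.+1 then rcons (digits k m' (j %/ k)) (j %% k) else [::].

Definition nat_of_digits (k : nat) (u : seq nat) : nat :=
  foldl (fun acc a => acc * k + a) 0 u.

Definition all_words (k n : nat) : seq (seq nat) := mkseq (digits k n) (k ^ n).

Section Digits.
Variable k : nat.
Hypothesis k_gt0 : 0 < k.

Lemma size_digits m j : size (digits k m j) = m.
Proof. by elim: m j => [|m IH] j //=; rewrite size_rcons IH. Qed.

Lemma digits_over m j : word_over k (digits k m j).
Proof. by elim: m j => [|m IH] j //=; rewrite /word_over all_rcons ltn_mod k_gt0; apply: IH. Qed.

Lemma nat_of_digits_rcons u a : nat_of_digits k (rcons u a) = nat_of_digits k u * k + a.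
Proof. by rewrite /nat_of_digits foldl_rcons. Qed.

Lemma nat_of_digits_lt u : word_over k u -> nat_of_digits k u < k ^ size u.
Proof.
elim/last_ind: u => [|u a IH] //; rewrite /word_over all_rcons => /andP[lt_ak /IH lt_u].
rewrite nat_of_digits_rcons size_rcons expnSr.
apply: (@leq_trans ((nat_of_digits k u).+1 * k)); first by rewrite mulSn addnC ltn_add2r.
by rewrite leq_mul2r lt_u orbT.
Qed.

Lemma nat_of_digitsK u : word_over k u -> digits k (size u) (nat_of_digits k u) = u.
Proof.
elim/last_ind: u => [|u a IH] //; rewrite /word_over all_rcons => /andP[lt_ak over_u].
rewrite size_rcons /= nat_of_digits_rcons divnMDl // divn_small // addn0 IH //.
by rewrite modnMDl modn_small.
Qed.

Lemma digitsK m j : j < k ^ m -> nat_of_digits k (digits k m j) = j.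
Proof.
elim: m j => [|m IH] j /=; first by rewrite expn0 ltnS leqn0 => /eqP->.
move=> lt_j; rewrite nat_of_digits_rcons IH -?divn_eq //.
by rewrite ltn_divLR // -expnSr.
Qed.

Lemma digits_inj m j j' : j < k ^ m -> j' < k ^ m -> digits k m j = digits k m j' -> j = j'.
Proof. by move=> lt_j lt_j' e; rewrite -(digitsK lt_j) -(digitsK lt_j') e. Qed.

Lemma lexle_digits m j j' : j <= j' -> j' < k ^ m -> lexle (digits k m j) (digits k m j').
Proof.
elim: m j j' => [|m IH] j j' //= le_jj' lt_j'.
have lt_div i : i < k ^ m.+1 -> i %/ k < k ^ m by rewrite ltn_divLR // -expnSr.
have lt_j := leq_ltn_trans le_jj' lt_j'.
rewrite -!cats1 lexle_cat ?size_digits //.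
case: eqP => [/(digits_inj (lt_div _ lt_j) (lt_div _ lt_j')) e|_].
  move: le_jj'; rewrite {1}(divn_eq j k) {1}(divn_eq j' k) e leq_add2l.
  by rewrite /= andbT orbC -leq_eqVlt.
exact/IH/lt_div/lt_j'/leq_div2r.
Qed.

Lemma uniq_all_words n : uniq (all_words k n).
Proof.
rewrite map_inj_in_uniq ?iota_uniq // => j j'.
by rewrite !mem_iota !add0n; apply: digits_inj.
Qed.

Lemma sorted_all_words n : sorted lexle (all_words k n).
Proof.
rewrite sorted_map; apply: (@sub_in_sorted _ (fun j => j < k ^ n) ltn).
- by move=> j j' _ lt_j' /ltnW le_jj'; apply: lexle_digits.
- by apply/allP => j; rewrite mem_iota.
exact: iota_ltn_sorted.
Qed.

Lemma mem_all_words n u : (u \in all_words k n) = (size u == n) && word_over k u.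
Proof.
apply/mapP/andP => [[j _ ->]|[/eqP <- over_u]]; first by rewrite size_digits digits_over.
by exists (nat_of_digits k u); rewrite ?nat_of_digitsK // mem_iota nat_of_digits_lt.
Qed.

Lemma size_all_words n : size (all_words k n) = k ^ n.
Proof. exact: size_mkseq. Qed.

Lemma nth_all_words n j : j < k ^ n -> nth [::] (all_words k n) j = digits k n j.
Proof. exact: nth_mkseq. Qed.

End Digits.

Lemma uniq_map_inj_in (T1 T2 : eqType) (f : T1 -> T2) s :
  uniq (map f s) -> {in s &, injective f}.
Proof.
elim: s => [|z s IH] //= /andP[fz_notin /IH f_inj] x y.
rewrite !inE => /predU1P[->|xs] /predU1P[->|ys] // e.
- by rewrite e map_f in fz_notin.
- by rewrite -e map_f in fz_notin.
exact: f_inj.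
Qed.

Section SortByPeriodicPrefix.
Variables (k n l : nat) (C : seq (seq nat)).
Hypotheses (k_gt0 : 0 < k) (l_gt0 : 0 < l) (size_C : {in C, forall X, size X = l}).
Hypothesis perm_ptake_C : perm_eq (map (ptake n) C) (all_words k n).

Lemma uniq_ptake_C : uniq (map (ptake n) C).
Proof. by rewrite (perm_uniq perm_ptake_C) uniq_all_words. Qed.

(* [ptake n] is monotone on words of length [l] and injective on [C], so it
   commutes with sorting. *)
Lemma ptake_sort : map (ptake n) (sort lexle C) = all_words k n.
Proof.
rewrite -(homo_sort_map_in (P := [in C]) (f := ptake n) (leT' := lexle)) ?allss //.
- have /(perm_sortP lexle_total lexle_trans lexle_anti) -> := perm_ptake_C.
  exact: sorted_sort lexle_trans _ (sorted_all_words k_gt0 n).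
- by move=> X Y XC YC /lexle_anti; apply: (uniq_map_inj_in uniq_ptake_C).
- by move=> X Y Z _ _ _; apply: lexle_trans.
- by move=> X Y _ _; apply: lexle_total.
move=> X Y XC YC; apply: ptake_mono; rewrite ?size_C ?l_gt0 //.
Qed.

Lemma size_sort_C : size (sort lexle C) = k ^ n.
Proof. by rewrite size_sort -(size_map (ptake n)) (perm_size perm_ptake_C) size_all_words. Qed.

Lemma ptake_nth_sort j : j < k ^ n -> ptake n (nth [::] (sort lexle C) j) = digits k n j.
Proof.
move=> lt_j; rewrite -(nth_all_words lt_j) -ptake_sort.
by rewrite (nth_map [::]) ?size_sort_C.
Qed.

End SortByPeriodicPrefix.

Definition block (k : nat) (w : seq nat) (i : nat) : seq nat :=
  [seq nth 0 w (i * k + r) | r <- iota 0 k].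

Lemma flatten_block_iota (T : Type) (f : nat -> T) a b c :
  flatten [seq [seq f (i * b + r) | r <- iota 0 b] | i <- iota c a] =
  [seq f j | j <- iota (c * b) (a * b)].
Proof.
elim: a c => [|a IH] c; first by rewrite mul0n.
rewrite mulSn iotaD map_cat (addnC (c * b)) -mulSn -IH /=; congr (_ ++ _).
by rewrite -{2}(addn0 (c * b)) iotaDl; elim: (iota 0 b) => //= r s ->.
Qed.

Lemma flatten_block k K w : size w = K * k -> flatten (mkseq (block k w) K) = w.
Proof.
move=> size_w; rewrite /mkseq /block (flatten_block_iota (nth 0 w)) mul0n -size_w.
exact: mkseq_nth.
Qed.

Lemma nth_flatten_uniform (T : eqType) (x0 : T) b (ws : seq (seq T)) i r :
  {in ws, forall s, size s = b} -> r < b ->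
  nth x0 (flatten ws) (i * b + r) = nth x0 (nth [::] ws i) r.
Proof.
elim: ws i => [|s ws IH] i size_ws lt_rb /=; first by rewrite !nth_nil.
rewrite nth_cat size_ws ?mem_head //; case: i => [|i]; first by rewrite lt_rb.
rewrite mulSn -addnA ltnNge leq_addr addKn IH // => t t_ws.
exact/size_ws/mem_behead.
Qed.

Lemma size_flatten_uniform (T : eqType) b (ws : seq (seq T)) :
  {in ws, forall s, size s = b} -> size (flatten ws) = size ws * b.
Proof.
elim: ws => [|s ws IH] //= size_ws; rewrite size_cat size_ws ?mem_head // IH ?mulSn //.
by move=> t t_ws; apply/size_ws/mem_behead.
Qed.

Lemma block_flatten k (ws : seq (seq nat)) i :
  {in ws, forall s, size s = k} -> i < size ws -> block k (flatten ws) i = nth [::] ws i.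
Proof.
move=> size_ws lt_i; have size_wsi : size (nth [::] ws i) = k by rewrite size_ws ?mem_nth.
rewrite -[RHS](mkseq_nth 0) size_wsi; apply/eq_in_map => r.
by rewrite mem_iota => /andP[_ lt_r]; apply: nth_flatten_uniform.
Qed.

Lemma GammaP k n w :
  Gamma k n.+1 w <-> size w = k ^ n.+1 /\ forall i, i < k ^ n -> Gk k (block k w i).
Proof.
rewrite /Gamma subSS subn0 expnSr.
split=> [[ws [size_ws [/allP Gk_ws ->]]]|[size_w Gk_block]].
  have size_G : {in ws, forall s, size s = k}.
    by move=> s /Gk_ws /perm_size; rewrite size_iota.
  split=> [|i lt_i]; first by rewrite (size_flatten_uniform size_G) size_ws.
  by rewrite block_flatten ?size_ws // Gk_ws ?mem_nth ?size_ws.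
exists (mkseq (block k w) (k ^ n)); rewrite size_mkseq flatten_block //.
by split=> //; split=> //; apply/allP => b /mapP[i]; rewrite mem_iota => /andP[_ /Gk_block ? ->].
Qed.

Lemma uniq_perm_iota k s : uniq s -> word_over k s -> size s = k -> perm_eq s (iota 0 k).
Proof.
move=> uniq_s /allP lt_s size_s; apply: uniq_perm; rewrite ?iota_uniq //.
have [] := @uniq_min_size _ s (iota 0 k) uniq_s; rewrite ?size_iota ?size_s //.
by move=> x /lt_s; rewrite mem_iota.
Qed.

Lemma block_index_lt k n i r : i < k ^ n -> r < k -> i * k + r < k ^ n.+1.
Proof.
move=> lt_i lt_r; apply: (@leq_trans (i.+1 * k)); first by rewrite mulSnr ltn_add2l.
by rewrite expnSr leq_mul2r lt_i orbT.
Qed.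

Lemma digits_block k n i r : 0 < k -> r < k -> digits k n.+1 (i * k + r) = rcons (digits k n i) r.
Proof. by move=> k_gt0 lt_r /=; rewrite divnMDl // divn_small // addn0 modnMDl modn_small. Qed.

Section LastColumn.
Variables (k n l : nat) (C : seq (seq nat)).
Hypotheses (k_gt0 : 0 < k) (l_gt0 : 0 < l).
Hypotheses (size_C : {in C, forall X, size X = l}) (rotr_C : {in C, forall X, rotr 1 X \in C}).
Hypothesis perm_ptake_C : perm_eq (map (ptake n.+1) C) (all_words k n.+1).

Let S := sort lexle C.

Lemma nth_sort_mem j : j < k ^ n.+1 -> nth [::] S j \in C.
Proof. by move=> lt_j; rewrite -(mem_sort lexle) mem_nth // (size_sort_C perm_ptake_C). Qed.

Lemma ptake_rotr_nth_sort i r : i < k ^ n -> r < k ->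
  ptake n.+1 (rotr 1 (nth [::] S (i * k + r))) = last 0 (nth [::] S (i * k + r)) :: digits k n i.
Proof.
move=> lt_i lt_r; set X := nth [::] S _; have lt_j := block_index_lt lt_i lt_r.
have ptake_X : ptake n X = digits k n i.
  have := ptake_nth_sort k_gt0 l_gt0 size_C perm_ptake_C lt_j.
  by rewrite digits_block // /ptake mkseqS => /rcons_inj[].
by rewrite ptake_rotr ?ptake_X // size_C ?nth_sort_mem.
Qed.

Lemma last_nth_sort_inj i r r' : i < k ^ n -> r < k -> r' < k ->
  last 0 (nth [::] S (i * k + r)) = last 0 (nth [::] S (i * k + r')) -> r = r'.
Proof.
move=> lt_i lt_r lt_r' eq_last; have lt_j := block_index_lt lt_i lt_r.
have lt_j' := block_index_lt lt_i lt_r'.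
have eq_rows : nth [::] S (i * k + r) = nth [::] S (i * k + r').
  apply/rotr_inj/(uniq_map_inj_in (uniq_ptake_C k_gt0 perm_ptake_C)).
  - exact/rotr_C/nth_sort_mem.
  - exact/rotr_C/nth_sort_mem.
  by rewrite !ptake_rotr_nth_sort // eq_last.
have := congr1 (ptake n.+1) eq_rows.
rewrite !(ptake_nth_sort k_gt0 l_gt0 size_C perm_ptake_C) // => /(digits_inj k_gt0 lt_j lt_j').
by move/eqP; rewrite eqn_add2l => /eqP.
Qed.

Lemma last_nth_sort_lt i r : i < k ^ n -> r < k -> last 0 (nth [::] S (i * k + r)) < k.
Proof.
move=> lt_i lt_r; have rot_C := rotr_C (nth_sort_mem (block_index_lt lt_i lt_r)).
have := map_f (ptake n.+1) rot_C; rewrite (perm_mem perm_ptake_C) (mem_all_words k_gt0).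
by rewrite ptake_rotr_nth_sort // => /andP[_ /andP[]].
Qed.

Lemma last_column_block i : i < k ^ n -> Gk k (block k (map (last 0) S) i).
Proof.
move=> lt_i; pose a r := last 0 (nth [::] S (i * k + r)).
have -> : block k (map (last 0) S) i = map a (iota 0 k).
  apply/eq_in_map => r; rewrite mem_iota /= => lt_r.
  by rewrite (nth_map [::]) ?(size_sort_C perm_ptake_C) ?block_index_lt.
apply: uniq_perm_iota; rewrite ?size_map ?size_iota //.
  rewrite map_inj_in_uniq ?iota_uniq // => r r'; rewrite !mem_iota /=.
  exact: last_nth_sort_inj.
by apply/allP => x /mapP[r]; rewrite mem_iota /= => lt_r ->; apply: last_nth_sort_lt.
Qed.

Lemma Gamma_last_column : Gamma k n.+1 (map (last 0) S).
Proof.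
apply/GammaP; rewrite size_map (size_sort_C perm_ptake_C).
by split=> // i; apply: last_column_block.
Qed.

End LastColumn.

Definition bw_period (M : seq (seq nat)) : nat := foldr lcmn 1 [seq size v | v <- M].

Definition bw_rows (M : seq (seq nat)) : seq (seq nat) :=
  flatten [seq [seq wpow w (bw_period M %/ size v) | w <- necklace_words v] | v <- M].

Lemma BWE M : BW M = map (last 0) (sort lexle (bw_rows M)).
Proof. by []. Qed.

Lemma size_bw_rows M : size (bw_rows M) = sumn [seq size v | v <- M].
Proof.
rewrite size_flatten /shape -map_comp; congr sumn; apply: eq_map => v /=.
by rewrite !size_map size_iota.
Qed.

Lemma mem_bw_rows M X : reflect
  (exists2 v, v \in M & exists2 t, t < size v & X = wpow (rot t v) (bw_period M %/ size v))
  (X \in bw_rows M).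
Proof.
apply: (iffP flattenP) => [[row /mapP[v vM ->] /mapP[w /mapP[t]]]|[v vM [t lt_t ->]]].
  by rewrite mem_iota => /andP[_ lt_t] -> ->; exists v => //; exists t.
exists [seq wpow w (bw_period M %/ size v) | w <- necklace_words v]; first exact: map_f.
by apply/map_f/mapP; exists t; rewrite // mem_iota.
Qed.

Lemma dvdn_bw_period M v : v \in M -> size v %| bw_period M.
Proof.
rewrite /bw_period; elim: M => [|u M IH] //=; rewrite inE => /predU1P[->|vM].
  exact: dvdn_lcml.
exact: dvdn_trans (IH vM) (dvdn_lcmr _ _).
Qed.

Lemma size_bw_row M X : X \in bw_rows M -> size X = bw_period M.
Proof.
by case/mem_bw_rows=> v vM [t _ ->]; rewrite size_wpow size_rot divnK ?dvdn_bw_period.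
Qed.

Section BWRows.
Variable M : seq (seq nat).
Hypothesis size_M_gt0 : {in M, forall v, 0 < size v}.

Lemma bw_period_gt0 : 0 < bw_period M.
Proof.
rewrite /bw_period; elim: M size_M_gt0 => [|u M' IH] //= size_gt0.
by rewrite lcmn_gt0 size_gt0 ?mem_head // IH // => v vM; apply/size_gt0/mem_behead.
Qed.

Lemma rotr_bw_row X : X \in bw_rows M -> rotr 1 X \in bw_rows M.
Proof.
case/mem_bw_rows=> v vM [t lt_t ->]; rewrite rotr1_wpow; apply/mem_bw_rows; exists v => //.
case: t lt_t => [|t] lt_t; last by exists t; rewrite ?(ltnW lt_t) // (rotS (ltnW lt_t)) rotK.
by exists (size v - 1); rewrite ?rot0 // subn1 ltn_predL size_M_gt0.
Qed.

End BWRows.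

Lemma deBruijn_size_gt0 k n M : deBruijn_set k n M -> {in M, forall v, 0 < size v}.
Proof.
case=> prim_M _ v /prim_M[prim_v _]; rewrite lt0n; apply/negP => /eqP/size0nil v0.
by apply: prim_v; exists [::], 2; rewrite v0.
Qed.

Lemma perm_ptake_bw_rows k n M : 0 < k -> deBruijn_set k n M ->
  perm_eq (map (ptake n) (bw_rows M)) (all_words k n).
Proof.
move=> k_gt0 HM; have M_gt0 := deBruijn_size_gt0 HM; case: HM => _ [size_M cover_M].
have covered : {subset all_words k n <= map (ptake n) (bw_rows M)}.
  move=> u; rewrite mem_all_words // => /andP[/eqP size_u over_u].
  have [v [vM [w [/mapP[t] + def_w [m prefix_u]]]]] := cover_M u size_u over_u.
  rewrite mem_iota => /andP[_ lt_t]; apply/mapP; exists (wpow w (bw_period M %/ size v)).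
    by apply/mem_bw_rows; exists v => //; exists t; rewrite -?def_w.
  rewrite ptake_wpow -?size_u ?(ptake_prefix prefix_u) // divn_gt0 ?M_gt0 //.
  by rewrite dvdn_leq ?bw_period_gt0 ?dvdn_bw_period.
have size_le : size (map (ptake n) (bw_rows M)) <= size (all_words k n).
  by rewrite size_map size_bw_rows size_M size_all_words.
have [size_eq same_mem] := uniq_min_size (uniq_all_words k_gt0 n) covered size_le.
rewrite perm_sym uniq_perm ?uniq_all_words //.
by rewrite (uniq_size_uniq (uniq_all_words k_gt0 n) same_mem) size_eq.
Qed.

Lemma deBruijn_BW_Gamma k n M : 0 < k -> deBruijn_set k n.+1 M -> Gamma k n.+1 (BW M).
Proof.
move=> k_gt0 HM; have M_gt0 := deBruijn_size_gt0 HM; rewrite BWE.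
apply: (Gamma_last_column k_gt0 (bw_period_gt0 M_gt0) (@size_bw_row M) (rotr_bw_row M_gt0)).
exact: perm_ptake_bw_rows.
Qed.

Lemma traject_mkseq (T : Type) (f : T -> T) x m :
  traject f x m = mkseq (fun t => iter t f x) m.
Proof.
apply: (@eq_from_nth _ x); rewrite size_traject ?size_mkseq // => i lt_i.
by rewrite nth_traject // nth_mkseq.
Qed.

Section InjectiveOrbits.
Variables (T : finType) (f : T -> T).
Hypothesis f_inj : injective f.

Lemma order_iter x t : order f (iter t f x) = order f x.
Proof.
elim: t => [|t IH] //; rewrite iterS -IH.
exact: order_id_cycle (cycle_orbit f_inj _).
Qed.

Lemma orbit_f x : orbit f (f x) = rot 1 (orbit f x).
Proof.
rewrite /orbit (order_id_cycle (cycle_orbit f_inj x)) -[order f x]orderSpred.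
by rewrite [in RHS]trajectS rot1_cons trajectSr -iterSr orderSpred (iter_order f_inj x).
Qed.

Lemma orbit_iter x t : t < order f x -> orbit f (iter t f x) = rot t (orbit f x).
Proof.
elim: t => [|t IH] lt_t; first by rewrite rot0.
by rewrite iterS orbit_f IH ?(ltnW lt_t) // -rotS // size_orbit ltnW.
Qed.

Lemma iter_mod_order x i : iter (i %% order f x) f x = iter i f x.
Proof.
have iter_mul q : iter (q * order f x) f x = x.
  by elim: q => [|q IH] //; rewrite mulSn iterD IH (iter_order f_inj).
by rewrite {2}(divn_eq i (order f x)) addnC iterD iter_mul.
Qed.

Lemma nth_orbit_mod x i : nth x (orbit f x) (i %% order f x) = iter i f x.
Proof. by rewrite nth_traject ?ltn_mod ?order_gt0 // iter_mod_order. Qed.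

Lemma iter_findex_root x : iter (findex f (froot f x) x) f (froot f x) = x.
Proof. by apply: iter_findex; rewrite (fconnect_sym f_inj) connect_root. Qed.

Lemma perm_orbits : perm_eq (flatten [seq orbit f r | r <- enum T & froots f r]) (enum T).
Proof.
set R := [seq r <- enum T | froots f r].
have count_orbits y : count_mem y (flatten [seq orbit f r | r <- R]) = 1.
  rewrite count_flatten -map_comp.
  rewrite (eq_in_map _ (fun r => nat_of_bool (r == froot f y)) _).1 ?sumn_count; last first.
    move=> r; rewrite mem_filter => /andP[/eqP root_r _] /=.
    rewrite count_uniq_mem ?orbit_uniq // -fconnect_orbit.
    by rewrite -(root_connect (fconnect_sym f_inj)) root_r.
  have -> : count (fun r => r == froot f y) R = count_mem (froot f y) R by [].
  rewrite (count_uniq_mem _ (filter_uniq _ (enum_uniq T))).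
  by rewrite mem_filter mem_enum andbT (roots_root (fconnect_sym f_inj)).
apply: uniq_perm; rewrite ?enum_uniq //; last first.
  by move=> y; rewrite mem_enum -has_pred1 has_count count_orbits.
by apply: count_mem_uniq => y; rewrite count_orbits -has_pred1 has_count count_orbits.
Qed.

End InjectiveOrbits.

Section BWInverse.
Variables (k n : nat) (w : seq nat).
Hypotheses (k_gt0 : 0 < k) (size_w : size w = k ^ n.+1).
Hypothesis Gk_block : forall i, i < k ^ n -> Gk k (block k w i).

Local Notation N := (k ^ n.+1).

Lemma divn_lt_pow j : j < N -> j %/ k < k ^ n.
Proof. by rewrite ltn_divLR // -expnSr. Qed.

Lemma nth_block_divn j : nth 0 (block k w (j %/ k)) (j %% k) = nth 0 w j.
Proof. by rewrite (nth_map 0) ?size_iota ?ltn_mod // nth_iota ?ltn_mod // add0n -divn_eq. Qed.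

Lemma nth_w_lt j : j < N -> nth 0 w j < k.
Proof.
move=> lt_j; have /perm_mem mem_block := Gk_block (divn_lt_pow lt_j).
have : nth 0 (block k w (j %/ k)) (j %% k) \in block k w (j %/ k).
  by rewrite mem_nth // size_map size_iota ltn_mod.
by rewrite mem_block mem_iota nth_block_divn.
Qed.

(* The LF mapping: row [j] of the sorted matrix starts with [digits k n.+1 j],
   so rotating it right gives the row whose index has digits [lf_digits j]. *)
Definition lf_digits j : seq nat := nth 0 w j :: digits k n (j %/ k).

Definition lf j : nat := nat_of_digits k (lf_digits j).

Lemma lf_digits_over j : j < N -> word_over k (lf_digits j).
Proof. by move=> lt_j; rewrite /word_over /= nth_w_lt //; apply: digits_over. Qed.

Lemma size_lf_digits j : size (lf_digits j) = n.+1.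
Proof. by rewrite /= size_digits. Qed.

Lemma digits_lf j : j < N -> digits k n.+1 (lf j) = lf_digits j.
Proof. by move=> lt_j; rewrite -{1}(size_lf_digits j) nat_of_digitsK // lf_digits_over. Qed.

Lemma lf_lt j : j < N -> lf j < N.
Proof. by move=> lt_j; rewrite -(size_lf_digits j) nat_of_digits_lt ?lf_digits_over. Qed.

Lemma lf_inj j j' : j < N -> j' < N -> lf j = lf j' -> j = j'.
Proof.
move=> lt_j lt_j' eq_lf; have := digits_lf lt_j; rewrite eq_lf digits_lf // => -[eq_w eq_digits].
have eq_div := digits_inj k_gt0 (divn_lt_pow lt_j) (divn_lt_pow lt_j') (esym eq_digits).
have uniq_block := perm_uniq (Gk_block (divn_lt_pow lt_j)); rewrite iota_uniq in uniq_block.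
have eq_mod : j %% k = j' %% k.
  apply/eqP; rewrite -(nth_uniq 0 _ _ uniq_block) ?size_map ?size_iota ?ltn_mod //.
  by rewrite nth_block_divn eq_div nth_block_divn eq_w.
by rewrite (divn_eq j k) (divn_eq j' k) eq_div eq_mod.
Qed.

Definition lfT (x : 'I_N) : 'I_N := Ordinal (lf_lt (ltn_ord x)).

Lemma lfT_inj : injective lfT.
Proof. by move=> x y /(congr1 val) /(lf_inj (ltn_ord x) (ltn_ord y)) /val_inj. Qed.

(* [psi x] is the index of row [x] rotated left by one letter. *)
Definition psi : 'I_N -> 'I_N := finv lfT.

Lemma psi_inj : injective psi.
Proof. exact: finv_inj lfT_inj. Qed.

Lemma digits_psi (x : 'I_N) : digits k n.+1 x = lf_digits (psi x).
Proof. by rewrite -digits_lf // -[in LHS](f_finv lfT_inj x). Qed.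

Definition lead_digit (x : 'I_N) : nat := nth 0 (digits k n.+1 x) 0.

Lemma lead_digit_psi (x : 'I_N) : lead_digit x = nth 0 w (psi x).
Proof. by rewrite /lead_digit digits_psi. Qed.

Lemma lead_digit_iter (x : 'I_N) i :
  i < n.+1 -> lead_digit (iter i psi x) = nth 0 (digits k n.+1 x) i.
Proof.
elim: i x => [|i IH] x // lt_i; rewrite iterSr IH 1?ltnW //.
by rewrite (digits_psi x) [digits _ _ (psi x)]/= nth_rcons size_digits -ltnS lt_i.
Qed.

Definition cycle_word (x : 'I_N) : seq nat := map lead_digit (orbit psi x).

Lemma size_cycle_word x : size (cycle_word x) = order psi x.
Proof. by rewrite size_map size_orbit. Qed.

Lemma nth_cycle_word x i : nth 0 (cycle_word x) (i %% order psi x) = lead_digit (iter i psi x).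
Proof. by rewrite (nth_map x) ?size_orbit ?ltn_mod ?order_gt0 // (nth_orbit_mod psi_inj). Qed.

Lemma cycle_word_iter x t : t < order psi x -> cycle_word (iter t psi x) = rot t (cycle_word x).
Proof. by move=> lt_t; rewrite /cycle_word (orbit_iter psi_inj) ?map_rot. Qed.

Lemma last_cycle_word x : last 0 (cycle_word x) = nth 0 w x.
Proof.
rewrite /cycle_word /orbit -orderSpred /= last_map last_traject lead_digit_psi.
by rewrite -iterS orderSpred (iter_order psi_inj).
Qed.

Lemma ptake_cycle_word x : ptake n.+1 (cycle_word x) = digits k n.+1 x.
Proof.
apply: (@eq_from_nth _ 0) => [|i]; rewrite size_ptake ?size_digits // => lt_i.
by rewrite nth_ptake // size_cycle_word nth_cycle_word lead_digit_iter.
Qed.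

Let roots_psi := [seq r <- enum 'I_N | froots psi r].

Definition BWinv : seq (seq nat) := [seq cycle_word r | r <- roots_psi].

Let l := bw_period BWinv.

Lemma cycle_word_root_mem x : cycle_word (froot psi x) \in BWinv.
Proof.
by apply: map_f; rewrite mem_filter mem_enum andbT (roots_root (fconnect_sym psi_inj)).
Qed.

Lemma order_dvdn_period x : order psi x %| l.
Proof.
rewrite -(iter_findex_root psi_inj x) order_iter; last exact: psi_inj.
by rewrite -size_cycle_word; apply/dvdn_bw_period/cycle_word_root_mem.
Qed.

Lemma BWinv_size_gt0 : {in BWinv, forall v, 0 < size v}.
Proof. by move=> _ /mapP[r _ ->]; rewrite size_cycle_word order_gt0. Qed.

Definition bw_row x : seq nat := wpow (cycle_word x) (l %/ order psi x).

Lemma bw_row_exp_gt0 x : 0 < l %/ order psi x.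
Proof.
rewrite divn_gt0 ?order_gt0 // dvdn_leq ?order_dvdn_period //.
exact: bw_period_gt0 BWinv_size_gt0.
Qed.

Lemma ptake_bw_row x : ptake n.+1 (bw_row x) = digits k n.+1 x.
Proof. by rewrite ptake_wpow ?bw_row_exp_gt0 ?ptake_cycle_word. Qed.

Lemma last_bw_row x : last 0 (bw_row x) = nth 0 w x.
Proof.
rewrite /bw_row -(prednK (bw_row_exp_gt0 x)) wpowSr last_cat -last_cycle_word.
by rewrite /cycle_word /orbit -orderSpred.
Qed.

Let rows := flatten [seq orbit psi r | r <- roots_psi].

Lemma bw_rows_BWinv : bw_rows BWinv = map bw_row rows.
Proof.
rewrite /bw_rows map_flatten /BWinv -!map_comp; congr flatten; apply: eq_map => r /=.
rewrite /necklace_words -map_comp /orbit traject_mkseq /mkseq -map_comp size_cycle_word.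
apply/eq_in_map => t; rewrite mem_iota => /andP[_ lt_t] /=.
by rewrite /bw_row cycle_word_iter // order_iter //; apply: psi_inj.
Qed.

Lemma perm_rows : perm_eq rows (enum 'I_N).
Proof. exact: perm_orbits psi_inj. Qed.

Lemma perm_ptake_bw_rows_BWinv :
  perm_eq (map (ptake n.+1) (bw_rows BWinv)) (all_words k n.+1).
Proof.
have := perm_map (digits k n.+1 \o val) perm_rows; rewrite [in X in perm_eq _ X]map_comp.
rewrite val_enum_ord bw_rows_BWinv -map_comp => perm_digits.
by rewrite (eq_map (f := ptake n.+1 \o bw_row) (g := digits k n.+1 \o val) ptake_bw_row).
Qed.

Lemma size_bw_rows_BWinv : size (bw_rows BWinv) = N.
Proof. by rewrite bw_rows_BWinv size_map (perm_size perm_rows) size_enum_ord. Qed.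

Lemma BW_BWinv : BW BWinv = w.
Proof.
have size_rows := @size_bw_row BWinv; have ptake_rows := perm_ptake_bw_rows_BWinv.
have size_sort := size_sort_C ptake_rows.
rewrite BWE; apply: (@eq_from_nth _ 0) => [|j]; rewrite size_map size_sort ?size_w // => lt_j.
rewrite (nth_map [::]) ?size_sort //.
have /mapP[x _ row_j] : nth [::] (sort lexle (bw_rows BWinv)) j \in map bw_row rows.
  by rewrite -bw_rows_BWinv -(mem_sort lexle) mem_nth ?size_sort.
have := ptake_nth_sort k_gt0 (bw_period_gt0 BWinv_size_gt0) size_rows ptake_rows lt_j.
rewrite row_j ptake_bw_row => /(digits_inj k_gt0 (ltn_ord x) lt_j) eq_x.
by rewrite last_bw_row eq_x.
Qed.

Lemma primitive_cycle_word x : primitive (cycle_word x).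
Proof.
case=> u [[|m] [lt_1m def_u]] //.
have order_x : order psi x = m.+1 * size u by rewrite -size_cycle_word def_u size_wpow.
have u_gt0 : 0 < size u by have := order_gt0 psi x; rewrite order_x muln_gt0 => /andP[].
have lt_u : size u < order psi x by rewrite order_x ltn_Pmull.
have iter_u : iter (size u) psi x = x.
  apply/val_inj/(digits_inj k_gt0 (ltn_ord _) (ltn_ord _)).
  by rewrite -!ptake_cycle_word (cycle_word_iter lt_u) def_u wpowS rot_size_cat -wpowSr.
have := findex_iter lt_u; rewrite iter_u findex0 => u0.
by rewrite -u0 in u_gt0.
Qed.

Lemma cycle_word_over x : word_over k (cycle_word x).
Proof.
apply/allP => _ /mapP[y _ ->]; apply: (allP (digits_over k_gt0 n.+1 y)).
by rewrite mem_nth ?size_digits.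
Qed.

Lemma cover_BWinv u : size u = n.+1 -> word_over k u ->
  exists v, v \in BWinv /\ exists w', w' \in necklace_words v /\
    exists m, prefix u (wpow w' m).
Proof.
move=> size_u over_u; have lt_u : nat_of_digits k u < N by rewrite -size_u nat_of_digits_lt.
pose x : 'I_N := Ordinal lt_u.
have digits_x : digits k n.+1 x = u by have := nat_of_digitsK k_gt0 over_u; rewrite size_u.
pose r := froot psi x; pose t := findex psi r x.
have lt_t : t < order psi r by rewrite findex_max // (fconnect_sym psi_inj) connect_root.
exists (cycle_word r); split; first exact: cycle_word_root_mem.
exists (cycle_word x); split.
  apply/mapP; exists t; first by rewrite mem_iota size_cycle_word.
  by rewrite -cycle_word_iter // iter_findex_root //; apply: psi_inj.
exists n.+1; rewrite -digits_x -ptake_cycle_word ptakeE ?size_cycle_word ?order_gt0 //.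
exact: prefix_take.
Qed.

Lemma deBruijn_BWinv : deBruijn_set k n.+1 BWinv.
Proof.
split=> [_ /mapP[r _ ->]|]; first by split; [apply: primitive_cycle_word | apply: cycle_word_over].
by split; [rewrite -size_bw_rows size_bw_rows_BWinv | apply: cover_BWinv].
Qed.

End BWInverse.

Unset Implicit Arguments.

Theorem theorem3p4 (k n : nat) (hk : 2 <= k) (hn : 1 <= n) (w : seq nat) :
  (exists M : seq (seq nat), deBruijn_set k n M /\ BW M = w) <-> Gamma k n w.
Proof.
have k_gt0 : 0 < k := ltnW hk.
case: n hn => // n _; split=> [[M [HM <-]]|/GammaP[size_w Gk_block]].
  exact: deBruijn_BW_Gamma.
exists (BWinv k_gt0 Gk_block); split; first exact: deBruijn_BWinv.
exact: BW_BWinv.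
Qed.
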